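(* Let $V$ be a real vector space of dimension $n$, $1\le k\le n-1$, and let $L\subseteq V\oplus\wedge^kV^*$ be weakly lagrangian. Then $L\cap V=\{0\}$ if and only if $L=\{\Lambda(\alpha)+\alpha\mid\alpha\in S\}$ is the graph of a higher Poisson structure $(S,\Lambda)$ on $V$. In this case, $L$ is lagrangian if and only if $L$ is standard (i.e. $\mathrm{rank}(\Lambda)=n$ or $\mathrm{rank}(\Lambda)\le n-k$) and $\mathrm{Ann}(\mathrm{Im}(\Lambda))=\ker(\Lambda)$.
   Context: On $V\oplus\wedge^kV^*$ consider the pairing $\langle X+\alpha,Y+\beta\rangle=i_X\beta+i_Y\alpha\in\wedge^{k-1}V^*$; $L^\perp$ is the orthogonal of $L$; $L$ is isotropic if $L\subseteq L^\perp$, lagrangian if $L=L^\perp$, and weakly lagrangian if isotropic and $L\cap V=\mathrm{pr}_2(L)^\circ$, where $\mathrm{pr}_2$ is the projection to $\wedge^kV^*$ and for $S\subseteq\wedge^kV^*$, $S^\circ=\{X\in V\mid i_X\eta=0\ \forall\eta\in S\}$. For $E\subseteq V$, $\mathrm{Ann}(E)=\{\alpha\in\wedge^kV^*\mid i_Y\alpha=0\ \forall Y\in E\}$. An isotropic $L$ is standard if $\mathrm{Ann}(E)^\circ=E$ where $E=\mathrm{pr}_1(L)$, equivalently $\dim E=n$ or $\dim E\le n-k$. A higher Poisson structure on $V$ is a pair $(S,\Lambda)$ with $S\subseteq\wedge^kV^*$ a subspace and $\Lambda:S\to V$ linear such that $S^\circ=\{0\}$ and $i_{\Lambda(\alpha)}\beta=-i_{\Lambda(\beta)}\alpha$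 for all $\alpha,\beta\in S$. *)

(* V = 'rV[R]_n for R : realType; k-forms on V are
   alternating multilinear maps ('I_k -> V) -> R. *)
From HB Require Import structures.
From mathcomp Require Import all_boot all_order all_algebra.
From mathcomp Require Import reals.
Set Implicit Arguments. Unset Strict Implicit. Unset Printing Implicit Defensive.
Import Order.TTheory GRing.Theory Num.Theory.
Local Open Scope ring_scope.

Section Forms.
Variables (R : realType) (n : nat).
Notation V := 'rV[R]_n.

Definition mform (k : nat) := ('I_k -> V) -> R.

Definition zeroF (k : nat) : mform k := fun _ => 0.
Arguments zeroF : clear implicits.
Definition lincombF k (a : R) (al be : mform k) : mform k :=
  fun v => a * al v + be v.

Definition set_slot k (v : 'I_k -> V) (i : 'I_k) (x : V) : 'I_k -> V :=
  fun j => if j == i then x else v j.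

Definition multilinear k (al : mform k) : Prop :=
  forall (v : 'I_k -> V) (i : 'I_k) (a : R) (x y : V),
    al (set_slot v i (a *: x + y)) = a * al (set_slot v i x) + al (set_slot v i y).

Definition alternating k (al : mform k) : Prop :=
  forall (v : 'I_k -> V) (i j : 'I_k), i != j -> v i = v j -> al v = 0.

Definition is_kform k (al : mform k) : Prop := multilinear al /\ alternating al.

Definition contr m (X : V) (al : mform m.+1) : mform m :=
  fun ys => al (fun j => match unlift ord0 j with
                         | Some j' => ys j'
                         | None => X end).

Definition pairing m (e1 e2 : V * mform m.+1) : mform m :=
  fun ys => contr e1.1 e2.2 ys + contr e2.1 e1.2 ys.

Definition is_subspace_dir m (L : V * mform m.+1 -> Prop) : Prop :=
  [/\ forall e, L e -> is_kform e.2,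
      L (0, zeroF m.+1) &
      forall a e1 e2, L e1 -> L e2 ->
        L (a *: e1.1 + e2.1, lincombF a e1.2 e2.2)].

Definition is_subspace_forms k (S : mform k -> Prop) : Prop :=
  [/\ forall al, S al -> is_kform al,
      S (zeroF k) &
      forall a al be, S al -> S be -> S (lincombF a al be)].

Definition orth m (L : V * mform m.+1 -> Prop) : V * mform m.+1 -> Prop :=
  fun e => is_kform e.2 /\ forall l, L l -> pairing e l = zeroF m.

Definition isotropic m (L : V * mform m.+1 -> Prop) : Prop :=
  forall e, L e -> orth L e.

Definition lagrangian m (L : V * mform m.+1 -> Prop) : Prop :=
  forall e, L e <-> orth L e.

Definition capV m (L : V * mform m.+1 -> Prop) : V -> Prop :=
  fun X => L (X, zeroF m.+1).

Definition pr1 m (L : V * mform m.+1 -> Prop) : V -> Prop :=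
  fun X => exists al, L (X, al).
Definition pr2 m (L : V * mform m.+1 -> Prop) : mform m.+1 -> Prop :=
  fun al => exists X, L (X, al).

Definition polar m (S : mform m.+1 -> Prop) : V -> Prop :=
  fun X => forall eta, S eta -> contr X eta = zeroF m.

Definition Ann m (E : V -> Prop) : mform m.+1 -> Prop :=
  fun al => is_kform al /\ forall Y, E Y -> contr Y al = zeroF m.

Definition weakly_lagrangian m (L : V * mform m.+1 -> Prop) : Prop :=
  isotropic L /\ forall X, capV L X <-> polar (pr2 L) X.

Definition standard m (L : V * mform m.+1 -> Prop) : Prop :=
  forall X, polar (Ann (m:=m) (pr1 L)) X <-> pr1 L X.

Definition higher_poisson m (S : mform m.+1 -> Prop) (Lam : mform m.+1 -> V) : Prop :=
  [/\ is_subspace_forms S,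
      (forall a al be, S al -> S be ->
         Lam (lincombF a al be) = a *: Lam al + Lam be),
      (forall X, polar S X -> X = 0) &
      (forall al be, S al -> S be ->
         contr (Lam al) be = (fun ys => - contr (Lam be) al ys))].

Definition is_graph m (L : V * mform m.+1 -> Prop) (S : mform m.+1 -> Prop)
  (Lam : mform m.+1 -> V) : Prop :=
  forall X al, L (X, al) <-> (S al /\ X = Lam al).

Definition imL m (S : mform m.+1 -> Prop) (Lam : mform m.+1 -> V) : V -> Prop :=
  fun X => exists al, S al /\ X = Lam al.
Definition kerL m (S : mform m.+1 -> Prop) (Lam : mform m.+1 -> V) : mform m.+1 -> Prop :=
  fun al => S al /\ Lam al = 0.

End Forms.

From HB Require Import structures.
From mathcomp Require Import all_boot all_order all_algebra.
From mathcomp Require Import reals.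
From Stdlib Require Import FunctionalExtensionality ClassicalEpsilon Classical.
From mathcomp Require Import ring lra zify.
Set Implicit Arguments. Unset Strict Implicit. Unset Printing Implicit Defensive.
Import Order.TTheory GRing.Theory Num.Theory.
Local Open Scope ring_scope.

(* Here k = m.+1.  If L meets V trivially, each alpha in S = pr_2(L) has a
   unique X with X + alpha in L; this defines a linear Lambda, isotropy of L
   is the skew-symmetry of Lambda, and weak lagrangianity gives S° = 0.
   For a graph L, skew-symmetry gives ker Lambda <= Ann(Im Lambda), while
   (0, alpha) lies in L^perp exactly when alpha is in Ann(Im Lambda); so
   L = L^perp forces equality.  The real work is that a lagrangian graph is
   standard: for X in Ann(Im Lambda)°, take a linear section s of Lambda and
   a k-form beta with i_Y beta = - i_X s(Y) for all Y in Im Lambda, built by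
   splitting V = Im Lambda (+) K.  The pairing of X + beta with
   Lambda alpha + alpha is then i_X (alpha - s(Lambda alpha)) = 0, because
   alpha - s(Lambda alpha) is in ker Lambda; hence X + beta is in L^perp = L.
   Conversely, if L is standard and Ann(Im Lambda) = ker Lambda, an element
   X + beta of L^perp has X in Ann(Im Lambda)° = Im Lambda, say
   X = Lambda gamma, and beta - gamma in Ann(Im Lambda) = ker Lambda. *)

Section Tuples.
Variables (R : realType) (n : nat).
Notation V := 'rV[R]_n.

Definition vcons m (x : V) (w : 'I_m -> V) : 'I_m.+1 -> V :=
  fun j => if unlift ord0 j is Some j' then w j' else x.

Definition vbehead m (v : 'I_m.+1 -> V) : 'I_m -> V := fun j => v (lift ord0 j).

Lemma contrE m X (al : mform R n m.+1) w : contr X al w = al (vcons X w).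
Proof. by []. Qed.

Lemma vcons0 m x (w : 'I_m -> V) : vcons x w ord0 = x.
Proof. by rewrite /vcons unlift_none. Qed.

Lemma vconsS m x (w : 'I_m -> V) j : vcons x w (lift ord0 j) = w j.
Proof. by rewrite /vcons liftK. Qed.

Lemma vbehead_cons m x (w : 'I_m -> V) : vbehead (vcons x w) = w.
Proof. by apply: functional_extensionality => j; rewrite /vbehead vconsS. Qed.

Lemma vcons_behead m (v : 'I_m.+1 -> V) : vcons (v ord0) (vbehead v) = v.
Proof.
by apply: functional_extensionality => j; rewrite /vcons /vbehead; case: unliftP => [j'|] ->.
Qed.

Lemma vcons_set_slot0 m x z (w : 'I_m -> V) : vcons x w = set_slot (vcons z w) ord0 x.
Proof.
apply: functional_extensionality => j; rewrite /set_slot /vcons.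
case: unliftP => [j'|] ->; last by rewrite eqxx.
by rewrite eq_sym (negbTE (neq_lift _ _)).
Qed.

Lemma vcons_set_slotS m x (w : 'I_m -> V) j y :
  vcons x (set_slot w j y) = set_slot (vcons x w) (lift ord0 j) y.
Proof.
apply: functional_extensionality => k; rewrite /set_slot /vcons.
case: unliftP => [k'|] ->; first by rewrite (inj_eq (@lift_inj _ ord0)).
by rewrite (negbTE (neq_lift _ _)).
Qed.

Lemma set_slotC k (v : 'I_k -> V) i j x y : i != j ->
  set_slot (set_slot v i x) j y = set_slot (set_slot v j y) i x.
Proof.
move=> ij; apply: functional_extensionality => l; rewrite /set_slot.
by case: (eqVneq l j) => [->|//]; rewrite eq_sym (negbTE ij).
Qed.

Lemma set_slot_id k (v : 'I_k -> V) i : set_slot v i (v i) = v.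
Proof.
by apply: functional_extensionality => l; rewrite /set_slot; case: (eqVneq l i) => [->|].
Qed.

Lemma set_slotE k (v : 'I_k -> V) i x : set_slot v i x i = x.
Proof. by rewrite /set_slot eqxx. Qed.

End Tuples.

Section Forms.
Variables (R : realType) (n : nat).
Notation V := 'rV[R]_n.

Definition linear_family m (phi : V -> mform R n m) :=
  forall b x y w, phi (b *: x + y) w = b * phi x w + phi y w.

Lemma linear_family0 m (phi : V -> mform R n m) w : linear_family phi -> phi 0 w = 0.
Proof.
by move=> lin; have := lin 1 0 0 w; rewrite scaler0 add0r; lra.
Qed.

Lemma multilinear_set0 k (al : mform R n k) v i :
  multilinear al -> al (set_slot v i 0) = 0.
Proof.
by move=> ml; have := ml v i 1 0 0; rewrite scale1r addr0; lra.
Qed.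

Lemma multilinearD k (al : mform R n k) v i x y : multilinear al ->
  al (set_slot v i (x + y)) = al (set_slot v i x) + al (set_slot v i y).
Proof. by move=> ml; have := ml v i 1 x y; rewrite scale1r mul1r. Qed.

Lemma kform_swap k (al : mform R n k) v i j x y : is_kform al -> i != j ->
  al (set_slot (set_slot v i x) j y) = - al (set_slot (set_slot v i y) j x).
Proof.
move=> [ml alt] ij.
pose f a b := al (set_slot (set_slot v i a) j b).
have f0 a : f a a = 0.
  apply: (alt _ i j ij); rewrite /set_slot eqxx (negbTE ij).
  by rewrite eq_sym (negbTE ij) eqxx.
have fDl a b c : f (a + b) c = f a c + f b c.
  by rewrite /f !(set_slotC _ _ _ ij) multilinearD.
have fDr a b c : f c (a + b) = f c a + f c b by rewrite /f multilinearD.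
have := f0 (x + y); rewrite fDl !fDr !f0 add0r addr0 => /eqP.
by rewrite addr_eq0 => /eqP.
Qed.

Lemma kform_swap_vcons k (al : mform R n k.+1) (t : 'I_k -> V) j x y :
  is_kform al -> al (vcons x (set_slot t j y)) = - al (vcons y (set_slot t j x)).
Proof.
move=> kf; rewrite !vcons_set_slotS (vcons_set_slot0 x 0) (vcons_set_slot0 y 0).
by apply: kform_swap => //; apply: neq_lift.
Qed.

Lemma kform_lincomb k a (al be : mform R n k) :
  is_kform al -> is_kform be -> is_kform (lincombF a al be).
Proof.
move=> [ml1 alt1] [ml2 alt2]; split => [v i b x y|v i j ij vij]; rewrite /lincombF.
  by rewrite ml1 ml2; ring.
by rewrite (alt1 _ _ _ ij vij) (alt2 _ _ _ ij vij); ring.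
Qed.

Lemma contr0 k (al : mform R n k.+1) : is_kform al -> contr 0 al = @zeroF R n k.
Proof.
case=> ml _; apply: functional_extensionality => w.
by rewrite contrE (vcons_set_slot0 _ 0) multilinear_set0.
Qed.

Definition contr_family m (phi : V -> mform R n m.+1) (c : V) : V -> mform R n m :=
  fun Y w => - phi Y (vcons c w).

Lemma contr_family_linear m (phi : V -> mform R n m.+1) c :
  linear_family phi -> linear_family (contr_family phi c).
Proof. by move=> lin b x y w; rewrite /contr_family lin; ring. Qed.

Lemma contr_family_multilinear m (phi : V -> mform R n m.+1) c Y :
  multilinear (phi Y) -> multilinear (contr_family phi c Y).
Proof. by move=> ml v i b x y; rewrite /contr_family !vcons_set_slotS ml; ring. Qed.

Lemma contr_family_kform m (phi : V -> mform R n m.+1) c Y :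
  is_kform (phi Y) -> is_kform (contr_family phi c Y).
Proof.
move=> [ml alt]; split => [|v i j ij vij]; first exact: contr_family_multilinear.
by rewrite /contr_family (alt _ (lift ord0 i) (lift ord0 j)) ?oppr0 ?vconsS ?(inj_eq (@lift_inj _ ord0)).
Qed.

End Forms.

Section Extension.
Variables (R : realType) (n : nat) (P : 'M[R]_n).
Hypothesis idemP : P *m P = P.
Notation V := 'rV[R]_n.

Definition proj (v : V) : V := v *m P.
Definition coproj (v : V) : V := v - v *m P.

Lemma projK a : proj (proj a) = proj a. Proof. by rewrite /proj -mulmxA idemP. Qed.

Lemma coproj_proj a : coproj (proj a) = 0.
Proof. by rewrite /coproj /proj -mulmxA idemP subrr. Qed.

Lemma proj_coproj a : proj (coproj a) = 0.
Proof. by rewrite /proj /coproj mulmxBl -mulmxA idemP subrr. Qed.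

Lemma proj_lin b x y : proj (b *: x + y) = b *: proj x + proj y.
Proof. by rewrite /proj mulmxDl scalemxAl. Qed.

Lemma coproj_lin b x y : coproj (b *: x + y) = b *: coproj x + coproj y.
Proof. by rewrite /coproj mulmxDl -scalemxAl scalerBr opprD addrACA. Qed.

Lemma proj_add_coproj x : proj x + coproj x = x.
Proof. by rewrite /proj /coproj addrC subrK. Qed.

Definition skew_on_range m (phi : V -> mform R n m) :=
  forall a b w i,
    phi (proj b) (set_slot w i (proj a)) = - phi (proj a) (set_slot w i (proj b)).

Lemma contr_family_skew m (phi : V -> mform R n m.+1) c :
  skew_on_range phi -> skew_on_range (contr_family phi c).
Proof. by move=> skew a b w i; rewrite /contr_family !vcons_set_slotS skew opprK. Qed.

(* The range part of the first argument is fed to phi; its kernel part c is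
   contracted into the family, with the sign of moving c past Y. *)
Fixpoint ext_form (m : nat) : (V -> mform R n m) -> mform R n m.+1 :=
  match m return (V -> mform R n m) -> mform R n m.+1 with
  | 0 => fun phi v => phi (proj (v ord0)) (vbehead v)
  | m'.+1 => fun phi v =>
      phi (proj (v ord0)) (vbehead v) + ext_form (contr_family phi (coproj (v ord0))) (vbehead v)
  end.

Lemma ext_form0 (phi : V -> mform R n 0) x w : ext_form phi (vcons x w) = phi (proj x) w.
Proof. by rewrite /= vcons0 vbehead_cons. Qed.

Lemma ext_formS m (phi : V -> mform R n m.+1) x w :
  ext_form phi (vcons x w) = phi (proj x) w + ext_form (contr_family phi (coproj x)) w.
Proof. by rewrite /= vcons0 vbehead_cons. Qed.

Lemma ext_form_lincomb m a (p1 p2 p3 : V -> mform R n m) :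
  (forall Y w, p3 Y w = a * p1 Y w + p2 Y w) ->
  forall v, ext_form p3 v = a * ext_form p1 v + ext_form p2 v.
Proof.
elim: m a p1 p2 p3 => [|m IH] a p1 p2 p3 h v; rewrite -(vcons_behead v).
  by rewrite !ext_form0 h.
move: (v ord0) (vbehead v) => x w.
rewrite !ext_formS h (IH a (contr_family p1 (coproj x)) (contr_family p2 (coproj x))); first ring.
by move=> Y u; rewrite /contr_family h; ring.
Qed.

Lemma ext_form_zero m (psi : V -> mform R n m) :
  (forall Y w, psi Y w = 0) -> forall v, ext_form psi v = 0.
Proof.
move=> psi0 v; have := ext_form_lincomb (a := -1) (p1 := psi) (p2 := psi) (p3 := psi).
by move/(_ _ v); rewrite mulN1r addNr; apply => Y w; rewrite psi0; ring.
Qed.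

Lemma ext_form_proj m (phi : V -> mform R n m) a w :
  (forall Y, multilinear (phi Y)) -> ext_form phi (vcons (proj a) w) = phi (proj a) w.
Proof.
case: m phi w => [|m] phi w ml; first by rewrite ext_form0 projK.
rewrite ext_formS projK coproj_proj ext_form_zero ?addr0 // => Y v.
by rewrite /contr_family (vcons_set_slot0 _ 0) multilinear_set0 ?oppr0.
Qed.

Lemma ext_form_kernel_slot m (psi : V -> mform R n m) u :
  proj u = 0 -> (forall w, psi 0 w = 0) ->
  (forall Y w j, w j = u -> psi Y w = 0) ->
  forall v j, v j = u -> ext_form psi v = 0.
Proof.
elim: m psi => [|m IH] psi pu psi0 kill v j vj; rewrite -(vcons_behead v).
  by rewrite (ord1 j) in vj; rewrite ext_form0 vj pu psi0.
rewrite ext_formS; case: (unliftP ord0 j) vj => [j'|] -> vj.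
  rewrite (kill _ _ j') // add0r; apply: (IH _ pu _ _ _ j' vj).
    by move=> w; rewrite /contr_family psi0 oppr0.
  by move=> Y w k wk; rewrite /contr_family (kill _ _ (lift ord0 k)) ?oppr0 ?vconsS.
rewrite vj pu psi0 add0r ext_form_zero // => Y w.
have coproj_u : coproj u = u by rewrite /coproj -[u *m P]/(proj u) pu subr0.
by rewrite /contr_family (kill _ _ ord0) ?oppr0 // vcons0 coproj_u.
Qed.

Lemma ext_form_multilinear m (phi : V -> mform R n m) :
  (forall Y, multilinear (phi Y)) -> linear_family phi -> multilinear (ext_form phi).
Proof.
elim: m phi => [|m IH] phi ml lin v i b x y; rewrite -(vcons_behead v).
  by rewrite (ord1 i) -!vcons_set_slot0 !ext_form0 proj_lin lin.
case: (unliftP ord0 i) => [i'|] ->.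
  rewrite -!vcons_set_slotS !ext_formS ml IH; first ring.
  - by move=> Y; apply: contr_family_multilinear.
  - exact: contr_family_linear.
rewrite -!vcons_set_slot0 !ext_formS proj_lin lin coproj_lin.
rewrite (ext_form_lincomb (a := b) (p1 := contr_family phi (coproj x))
                          (p2 := contr_family phi (coproj y))); first ring.
by move=> Y w; rewrite /contr_family (vcons_set_slot0 _ 0) ml -!vcons_set_slot0; ring.
Qed.

Lemma ext_form_vcons_repeat m (phi : V -> mform R n m.+1) x w j :
  (forall Y, is_kform (phi Y)) -> linear_family phi -> skew_on_range phi ->
  (forall c, is_kform (ext_form (contr_family phi c))) ->
  w j = x -> ext_form phi (vcons x w) = 0.
Proof.
move=> kf lin skew kfE wj.
have ml Y : multilinear (phi Y) by case: (kf Y).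
have mlE c : multilinear (ext_form (contr_family phi c)) by case: (kfE c).
have -> : w = set_slot w j (proj x + coproj x) by rewrite proj_add_coproj -wj set_slot_id.
rewrite ext_formS (multilinearD _ _ _ _ (ml _)) (multilinearD _ _ _ _ (mlE _)).
have range_range : phi (proj x) (set_slot w j (proj x)) = 0.
  by have := skew x x w j; lra.
have kernel_kernel : ext_form (contr_family phi (coproj x)) (set_slot w j (coproj x)) = 0.
  apply: (ext_form_kernel_slot (u := coproj x) _ _ _ (j := j)); rewrite ?set_slotE //.
  - exact: proj_coproj.
  - by move=> u; apply/linear_family0/contr_family_linear.
  - move=> Y u k uk; rewrite /contr_family; case: (kf Y) => _ alt.
    by rewrite (alt _ ord0 (lift ord0 k)) ?oppr0 ?neq_lift // vcons0 vconsS.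
have range_kernel : ext_form (contr_family phi (coproj x)) (set_slot w j (proj x)) =
                    - phi (proj x) (set_slot w j (coproj x)).
  have mlF Y : multilinear (contr_family phi (coproj x) Y).
    exact: contr_family_multilinear.
  rewrite -(vcons_behead w); move: (w ord0) (vbehead w) => w0 t.
  case: (unliftP ord0 j) => [j'|] ->.
    rewrite -!vcons_set_slotS (kform_swap_vcons _ _ _ _ (kfE _)) ext_form_proj //.
    by rewrite /contr_family opprK (kform_swap_vcons _ _ _ _ (kf _)).
  by rewrite -!vcons_set_slot0 ext_form_proj.
by rewrite range_range range_kernel kernel_kernel; ring.
Qed.

Lemma ext_form_alternating m (phi : V -> mform R n m) :
  (forall Y, is_kform (phi Y)) -> linear_family phi -> skew_on_range phi ->
  alternating (ext_form phi).
Proof.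
elim: m phi => [|m IH] phi kf lin skew v i j ij vij.
  by move: ij; rewrite (ord1 i) (ord1 j) eqxx.
have kfE c : is_kform (ext_form (contr_family phi c)).
  split.
    apply: ext_form_multilinear; last exact: contr_family_linear.
    by move=> Y; apply: contr_family_multilinear; case: (kf Y).
  apply: IH; last exact: contr_family_skew.
    by move=> Y; apply: contr_family_kform.
  exact: contr_family_linear.
rewrite -(vcons_behead v) in vij *; move: (v ord0) (vbehead v) vij => x w vij.
case: (unliftP ord0 i) ij vij => [i'|] -> ij; case: (unliftP ord0 j) ij => [j'|] -> ij.
- rewrite !vconsS => vij; have ij' : i' != j' by rewrite (inj_eq (@lift_inj _ ord0)) in ij.
  case: (kf (proj x)) (kfE (coproj x)) => [_ alt] [_ altE].
  by rewrite ext_formS (alt _ _ _ ij' vij) (altE _ _ _ ij' vij) addr0.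
- by rewrite vconsS vcons0 => vij; apply: (ext_form_vcons_repeat (j := i')).
- by rewrite vconsS vcons0 => vij; apply: (ext_form_vcons_repeat (j := j')).
- by rewrite eqxx in ij.
Qed.

Lemma kform_extension m (phi : V -> mform R n m) :
  (forall Y, is_kform (phi Y)) -> linear_family phi -> skew_on_range phi ->
  exists be : mform R n m.+1, is_kform be /\ forall Y, Y *m P = Y -> contr Y be = phi Y.
Proof.
move=> kf lin skew; have ml Y : multilinear (phi Y) by case: (kf Y).
exists (ext_form phi); split; first by split; [exact: ext_form_multilinear | exact: ext_form_alternating].
move=> Y pY; apply: functional_extensionality => w.
by rewrite -pY -[Y *m P]/(proj Y) contrE ext_form_proj.
Qed.

End Extension.

Section Rowspace.
Variables (R : realType) (n : nat) (A : 'rV[R]_n -> Prop).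
Hypothesis Acl : forall a x y, A x -> A y -> A (a *: x + y).

Lemma rowspace_or_extend (M : 'M[R]_n) : (forall x, (x <= M)%MS -> A x) ->
  (forall x, A x <-> (x <= M)%MS) \/
  exists M' : 'M[R]_n, (forall x, (x <= M')%MS -> A x) /\ (\rank M < \rank M')%N.
Proof.
move=> AM.
have [[u Au uM]|cover] := classic (exists2 u, A u & ~~ (u <= M)%MS); last first.
  left => x; split => [Ax|/AM //].
  by apply/negPn/negP => xM; apply: cover; exists x.
right; exists (M + u)%MS; split.
  move=> x /sub_addsmxP [[x1 x2] /= ->].
  rewrite addrC (mx11_scalar x2) mul_scalar_mx; apply: Acl => //.
  exact/AM/submxMl.
have : (M < M + u)%MS by rewrite ltmxE addsmxSl addsmx_sub submx_refl.
by rewrite ltmxErank => /andP [].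
Qed.

Lemma rowspace_of_subspace : A 0 -> exists M : 'M[R]_n, forall x, A x <-> (x <= M)%MS.
Proof.
move=> A0.
suff grow d (M : 'M[R]_n) : (n - \rank M <= d)%N -> (forall x, (x <= M)%MS -> A x) ->
    exists M : 'M[R]_n, forall x, A x <-> (x <= M)%MS.
  apply: (grow n 0); first by lia.
  by move=> x; rewrite submx0 => /eqP ->.
elim: d M => [|d IH] M rkM AM.
  have [eqM|[M' [_ rk_lt]]] := rowspace_or_extend AM; first by exists M.
  by have := rank_leq_col M'; lia.
have [eqM|[M' [AM' rk_lt]]] := rowspace_or_extend AM; first by exists M.
by apply: (IH M') => //; have := rank_leq_col M'; lia.
Qed.

End Rowspace.

Section Graph.
Variables (R : realType) (n m : nat).
Notation V := 'rV[R]_n.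
Notation F := (mform R n m.+1).

Lemma lincombNr (al : F) : lincombF (-1) al al = @zeroF R n m.+1.
Proof. by apply: functional_extensionality => v; rewrite /lincombF /zeroF; ring. Qed.

Lemma graph_of_capV_trivial (L : V * F -> Prop) :
  is_subspace_dir L -> weakly_lagrangian L -> (forall X, capV L X -> X = 0) ->
  exists S Lam, higher_poisson S Lam /\ is_graph L S Lam.
Proof.
move=> [hkf h0 hcl] [hiso hwl] hcap.
have uniq X Y al : L (X, al) -> L (Y, al) -> X = Y.
  move=> hX hY; have := hcl (-1) _ _ hX hY; rewrite /= lincombNr scaleN1r => /hcap.
  by move/eqP; rewrite addrC subr_eq0 => /eqP.
pose Lam (al : F) := epsilon (inhabits (0 : V)) (fun X => L (X, al)).
have LamP al : pr2 L al -> L (Lam al, al).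
  by move=> [X hX]; apply: (epsilon_spec (inhabits (0 : V)) (fun X => L (X, al))); exists X.
have pr2_cl a al be : pr2 L al -> pr2 L be -> pr2 L (lincombF a al be).
  by move=> [X hX] [Y hY]; exists (a *: X + Y); exact: hcl _ _ _ hX hY.
exists (pr2 L), Lam; split; last first.
  move=> X al; split; last by move=> [hS ->]; apply: LamP.
  by move=> h; split; [exists X | apply: (uniq _ _ al) => //; apply: LamP; exists X].
split.
- by split => [al [X /hkf]||] //; exists 0.
- move=> a al be hal hbe; symmetry; apply: (uniq _ _ (lincombF a al be)).
    exact: hcl _ _ _ (LamP _ hal) (LamP _ hbe).
  exact/LamP/pr2_cl.
- by move=> X hX; apply/hcap/hwl.
- move=> al be hal hbe; apply: functional_extensionality => ys.
  have := congr1 (fun f => f ys) ((hiso _ (LamP _ hal)).2 _ (LamP _ hbe)).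
  by rewrite /pairing /zeroF /= => /eqP; rewrite addr_eq0 => /eqP.
Qed.

Section Poisson.
Variables (S : F -> Prop) (Lam : F -> V).
Hypothesis hp : higher_poisson S Lam.

Lemma higher_poisson_Lam0 : Lam (@zeroF R n m.+1) = 0.
Proof.
have [[_ S0 _] lin _ _] := hp; have := lin (-1) _ _ S0 S0.
by rewrite lincombNr scaleN1r addNr.
Qed.

Lemma kerL_sub_Ann_imL al : kerL S Lam al -> Ann (imL S Lam) al.
Proof.
have [[hkf _ _] _ _ skew] := hp; move=> [hS hL0]; split; first exact: hkf.
move=> Y [be [hbe ->]]; rewrite skew // hL0 contr0; last exact: hkf.
by apply: functional_extensionality => w; rewrite /zeroF oppr0.
Qed.

Lemma rowspace_imL : exists M : 'M[R]_n, forall x, imL S Lam x <-> (x <= M)%MS.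
Proof.
have [[_ S0 Scl] lin _ _] := hp; apply: rowspace_of_subspace.
  move=> a _ _ [al [hal ->]] [be [hbe ->]].
  by exists (lincombF a al be); split; [exact: Scl | rewrite lin].
by exists (@zeroF R n m.+1); rewrite higher_poisson_Lam0.
Qed.

Lemma higher_poisson_sum (I : Type) (r : seq I) (als : I -> F) (c : I -> R) :
  (forall i, S (als i)) ->
  S (fun w => \sum_(i <- r) c i * als i w) /\
  Lam (fun w => \sum_(i <- r) c i * als i w) = \sum_(i <- r) c i *: Lam (als i).
Proof.
have [[_ S0 Scl] lin _ _] := hp; move=> Sals; elim: r => [|i r [IHS IHLam]].
  have -> : (fun w => \sum_(i <- [::]) c i * als i w) = @zeroF R n m.+1.
    by apply: functional_extensionality => w; rewrite big_nil.
  by rewrite big_nil higher_poisson_Lam0.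
have -> : (fun w => \sum_(j <- i :: r) c j * als j w) =
          lincombF (c i) (als i) (fun w => \sum_(j <- r) c j * als j w).
  by apply: functional_extensionality => w; rewrite big_cons.
by rewrite big_cons; split; [exact: Scl | rewrite lin // IHLam].
Qed.

Lemma higher_poisson_section : exists (P : 'M[R]_n) (s : V -> F),
  [/\ P *m P = P, forall al, S al -> Lam al *m P = Lam al,
      forall v, S (s v), forall v, Lam (s v) = v *m P & linear_family s].
Proof.
have [M imM] := rowspace_imL.
have rowP i : exists al, S al /\ row i M = Lam al by apply/imM; exact: row_sub.
pose als i := proj1_sig (constructive_indefinite_description _ (rowP i)).
have alsP i : S (als i) /\ row i M = Lam (als i).
  exact: proj2_sig (constructive_indefinite_description _ (rowP i)).
pose s (v : V) : F := fun w => \sum_i (v *m pinvmx M) 0 i * als i w.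
have sumP (v : V) :=
  higher_poisson_sum (index_enum 'I_n) (fun i => (v *m pinvmx M) 0 i) (fun i => (alsP i).1).
exists (pinvmx M *m M), s; split.
- by rewrite mulmxA mulmxKpV // submxMl.
- by move=> al hal; rewrite mulmxA mulmxKpV //; apply/imM; exists al.
- by move=> v; case: (sumP v).
- move=> v; rewrite (sumP v).2 [RHS]mulmxA (mulmx_sum_row (v *m pinvmx M) M).
  by apply: eq_bigr => i _; rewrite (alsP i).2.
- move=> b x y w; rewrite /s mulmxDl -scalemxAl mulr_sumr -big_split /=.
  by apply: eq_bigr => i _; rewrite !mxE; ring.
Qed.

Lemma higher_poisson_skew_slot X (al be : F) (w : 'I_m -> V) i : S al -> S be ->
  be (vcons X (set_slot w i (Lam al))) = - al (vcons X (set_slot w i (Lam be))).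
Proof.
have [[hkf _ _] _ _ skew] := hp; move=> hal hbe.
rewrite (kform_swap_vcons _ _ _ _ (hkf _ hbe)) (kform_swap_vcons _ _ _ _ (hkf _ hal)).
have := congr1 (fun f => f (set_slot w i X)) (skew _ _ hal hbe).
by rewrite /= !contrE => ->; rewrite opprK.
Qed.

Variable L : V * F -> Prop.
Hypothesis hg : is_graph L S Lam.

Lemma capV_graph X : capV L X -> X = 0.
Proof. by move=> /hg [_ ->]; exact: higher_poisson_Lam0. Qed.

Lemma Ann_pr1_graph (al : F) : Ann (pr1 L) al <-> Ann (imL S Lam) al.
Proof.
have pr1E Y : pr1 L Y <-> imL S Lam Y.
  by split => [[al' /hg [h ->]]|[al' [h ->]]]; exists al' => //; apply/hg.
by split => -[kf ann]; split => // Y /pr1E; apply: ann.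
Qed.

Lemma lagrangian_graph_Ann_imL : lagrangian L ->
  forall al : F, Ann (imL S Lam) al <-> kerL S Lam al.
Proof.
have [[hkf _ _] _ _ _] := hp.
move=> hlag al; split => [[kf ann]|]; last exact: kerL_sub_Ann_imL.
have : L (0, al).
  apply/hlag; split => // -[Y be] /hg [hbe ->].
  apply: functional_extensionality => ys; rewrite /pairing /= (contr0 (hkf _ hbe)) ann.
    by rewrite /zeroF addr0.
  by exists be.
by move/hg => [hS /esym].
Qed.

Lemma lagrangian_graph_standard : lagrangian L -> standard L.
Proof.
move=> hlag X; split; last by move=> hX eta [_]; apply.
move=> hX; have [[hkf _ Scl] lin _ _] := hp.
have [P [s [idemP LamP Ss Lams slin]]] := higher_poisson_section.
pose phi := contr_family s X.
have [be [kfbe contr_be]] : exists be : F, is_kform be /\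
    forall Y, Y *m P = Y -> contr Y be = phi Y.
  apply: kform_extension => //.
  - by move=> Y; apply/contr_family_kform/hkf.
  - exact: contr_family_linear.
  - move=> a b w i; rewrite /phi /contr_family /proj.
    have := higher_poisson_skew_slot X w i (Ss (a *m P)) (Ss (b *m P)).
    by rewrite !Lams -!mulmxA idemP => ->; rewrite opprK.
suff : L (X, be) by exists be.
apply/hlag; split => // -[Y al] /hg [hal ->].
apply: functional_extensionality => ys; rewrite /pairing /= contr_be ?LamP //.
have ker_de : kerL S Lam (lincombF (-1) (s (Lam al)) al).
  by split; [exact: Scl | rewrite lin // Lams LamP // scaleN1r addNr].
have := hX _ (proj2 (Ann_pr1_graph _) (kerL_sub_Ann_imL ker_de)).
move/(congr1 (fun f => f ys)).
by rewrite /phi /contr_family /zeroF /lincombF !contrE; lra.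
Qed.

Lemma graph_lagrangian : isotropic L -> standard L ->
  (forall al : F, Ann (imL S Lam) al <-> kerL S Lam al) -> lagrangian L.
Proof.
move=> hiso hstd hak [X be]; split; first exact: hiso.
move=> [kfb horth]; have [[hkf _ Scl] lin _ _] := hp.
have inL al : S al -> L (Lam al, al) by move=> hal; apply/hg.
have : pr1 L X.
  apply/hstd => eta /Ann_pr1_graph /hak [hSe hLe].
  have /horth : L (0, eta) by apply/hg.
  rewrite /pairing /= (contr0 kfb) => eta0; apply: functional_extensionality => ys.
  by have := congr1 (fun f => f ys) eta0; rewrite /zeroF addr0.
case=> ga /hg [hga eX]; subst X.
pose de := lincombF (-1) ga be.
have ann_de : Ann (imL S Lam) de.
  split; first exact: kform_lincomb (hkf _ hga) kfb.
  move=> Y [al [hal ->]]; apply: functional_extensionality => ys.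
  have := congr1 (fun f => f ys) (horth _ (inL _ hal)).
  have := congr1 (fun f => f ys) ((hiso _ (inL _ hga)).2 _ (inL _ hal)).
  by rewrite /pairing /zeroF /= !contrE /de /lincombF; lra.
have [hSde hLde] := (hak de).1 ann_de.
have -> : be = lincombF 1 ga de.
  by apply: functional_extensionality => w; rewrite /de /lincombF; ring.
by apply/hg; split; [exact: Scl | rewrite lin // hLde scale1r addr0].
Qed.

End Poisson.
End Graph.

Theorem proposition3p16 (R : realType) (n m : nat) (hk : (m.+1 < n)%N)
  (L : 'rV[R]_n * mform R n m.+1 -> Prop)
  (hL : is_subspace_dir L) (hwl : weakly_lagrangian L) :
  ((forall X, capV L X -> X = 0) <->
     exists (S : mform R n m.+1 -> Prop) (Lam : mform R n m.+1 -> 'rV[R]_n),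
       higher_poisson S Lam /\ is_graph L S Lam)
  /\
  (forall (S : mform R n m.+1 -> Prop) (Lam : mform R n m.+1 -> 'rV[R]_n),
     higher_poisson S Lam -> is_graph L S Lam ->
     (lagrangian L <->
        (standard L /\ forall al, Ann (m:=m) (imL S Lam) al <-> kerL S Lam al))).
Proof.
split.
  split; first exact: graph_of_capV_trivial.
  by move=> [S [Lam [hp hg]]] X; apply: (capV_graph hp hg).
move=> S Lam hp hg; split.
  move=> hlag; split; first exact: (lagrangian_graph_standard hp hg hlag).
  exact: (lagrangian_graph_Ann_imL hp hg hlag).
by move=> [hstd hak]; exact: (graph_lagrangian hp hg hwl.1 hstd hak).
Qed.
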